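(* Consider an execution of Algorithm 1 with choose_leader given by Algorithm 2 (Carousel). Let $r'$ be a round after GST such that the parties $(r' \bmod n)$ and $(r'+1 \bmod n)$ are honest, and let $r\le r'$. Suppose $f$ blocks with round numbers in $[r,r')$ and with pairwise different Byzantine authors are committed. Then for any block $B$ with round number $r'$ or $r'+1$ that is immediately committed, there is an honest block with round number in $[r,r'+1]$ on $B$'s implied chain.
   Context: System model: $n$ parties $\Pi=\{p_1,\dots,p_n\}$ (party $(j \bmod n)$ denotes the round-robin party indexed by $j$), at most $f<n/3$ faulty. A party is crashed if it halts prematurely; Byzantine if it deviates from the protocol arbitrarily; honest if neither. Non-Byzantine parties follow the protocol until they (possibly) crash. Communication is eventually synchronous: there is an unknown global stabilization time (GST) after which every message arrives within a known bound $\delta$. Blocks: a block contains transactions, a link to a parent block (implied chain back to genesis), a round number, an author id, and a certificate from which a set of $2f+1$ endorsing parties can be obtained. certified$(B,r)$ is a local predicate saying $B$ has a valid certificate ($2f+1$ endorsements) for round $r$. $B\longrightarrow B'$ means $B$ is on $B'$'s implied chain. An honest (resp. Byzantine) block is one authored by an honest (resp. Byzantine) party. A block is committed if some honest party commits it; a block $B$ with round number $r$ is immediately committed if some honest party commits $B$ in round $r$ (in its handler for new_round$(r)$). LBR abstraction: each party can invoke $LBR(r,\ell)$; non-Byzantine parties endorse a block with round $r$ and author $\ell$ only by calling $LBR(r,\ell)$. Every invocation returns within $\Delta_l>c\delta$ time ($c$ an implementation constant) a block with round number $r'\le r$. Round $r$ has $k$ LBR-synchronized($\ell$) invocations if $k$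 honest parties invoke $LBR(r,\ell)$ after GST and their execution intervals share a common intersection of length at least $c\delta$. Guarantees: (Endorsement) if certified$(B,r)$ then $B$'s endorser set has $2f+1$ parties; (Agreement) any two certified blocks returned to honest parties by LBR satisfy $B\longrightarrow B'$ or $B'\longrightarrow B$; (Progress) if round $r$ has $k\ge 2f+1$ LBR-synchronized($\ell$) invocations and $\ell$ is honest, they all return a certified block with round number $r$ authored by $\ell$; (Blocking) if a non-Byzantine $\ell$ never invokes $LBR(r,\ell)$, no $LBR(r,\ell)$ invocation returns a certified block formed in round $r$; (Reputation) if a non-Byzantine $p$ never invokes LBR for round $r$, no certified block with round number $r$ has $p$ among its endorsers. Pacemaker: produces new_round$(r)$ notifications at honest parties for every $r$; if all new_round$(r)$ notifications at non-Byzantine parties occur after GST, the first at $T_f$ and last at $T_l$, then $T_l-T_f\le\delta$ and no non-Byzantine party receives new_round$(r+1)$ before $T_l+\Delta_p$, where $\Delta_p=\Delta_l$. A round $r$ occurs after GST if all new_round$(r)$ notifications at honest parties occur after GST. Algorithm 1 (party $p_i$): initially commit_head $:=$ genesis. Upon new_round$(r)$: leader $:=$ choose_leader$(r,$ commit_head$)$; $B:=LBR(r,\text{leader})$; if commit_head $\longrightarrow B$, commit $B$ (and all not-yet-committed blocks on its implied chain) and set commit_head $:=B$. Algorithm 2 (Carousel), choose_leader$(r,h)$: if the round number of $h$ is not $r-1$, return party $(r \bmod n)$ (round-robin mechanism). Otherwise let active be the endorser set of $h$; walking from $h$ along parent links, add block authors to last_authors while $|\text{last\_authors}|<f$ and the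 current block is not genesis; return a deterministically chosen element of active $\setminus$ last_authors (reputation mechanism). *)

From HB Require Import structures.
From mathcomp Require Import all_boot.
From Stdlib Require Import Reals.

Set Implicit Arguments.
Unset Strict Implicit.
Unset Printing Implicit Defensive.

Record system (n f : nat) := System {
  fault_bound : 3 * f < n;
  Block : eqType;
  genesis : Block;
  parent : Block -> Block;
  round : Block -> nat;
  author : Block -> 'I_n;
  endorsers : Block -> {set 'I_n};
  (* certified B : B carries a valid certificate for its round round B *)
  certified : Block -> Prop;
  parent_genesis : parent genesis = genesis;
  round_genesis : round genesis = 0;
  (* the implied chain goes back to genesis: parents have smaller rounds *)
  round_parent : forall B, B != genesis -> round (parent B) < round B;
  dchoice : {set 'I_n} -> 'I_n;
  dchoiceP : forall A : {set 'I_n}, A != set0 -> dchoice A \in A;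
  delta : R;
  delta_pos : Rlt R0 delta;
  c_impl : R;
  Delta_l : R;
  Delta_l_gt : Rlt (Rmult c_impl delta) Delta_l
}.

Arguments parent {n f} s _ : rename.
Arguments round {n f} s _ : rename.
Arguments author {n f} s _ : rename.
Arguments endorsers {n f} s _ : rename.
Arguments certified {n f} s _ : rename.
Arguments dchoice {n f} s _ : rename.

Section SystemDefs.
Variables (n f : nat) (S : system n f).

Definition on_chain (B B' : Block S) : Prop :=
  exists k : nat, iter k (parent S) B' = B.

Fixpoint walk (fuel : nat) (cur : Block S) (acc : {set 'I_n}) : {set 'I_n} :=
  match fuel with
  | 0 => acc
  | k.+1 =>
      if (#|acc| < f) && (cur != genesis S)
      then walk k (parent S cur) (author S cur |: acc)
      else acc
  end.

(* round strictly decreases along parent links, so (round h).+1 steps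
   suffice to reach genesis *)
Definition last_authors (h : Block S) : {set 'I_n} :=
  walk (round S h).+1 h set0.

Lemma n_gt0 : 0 < n.
Proof. have H := fault_bound S. by apply: leq_ltn_trans H. Qed.

Definition rr (j : nat) : 'I_n := Ordinal (ltn_pmod j n_gt0).

Definition choose_leader (r : nat) (h : Block S) : 'I_n :=
  if round S h != r.-1 then rr r
  else dchoice S (endorsers S h :\: last_authors h).

End SystemDefs.

(* An execution of Algorithm 1 with choose_leader = Carousel, over the *)
(* LBR and Pacemaker abstractions.  Rounds are 1, 2, 3, ...            *)
(*  handles p r   : p receives new_round(r) and runs its handler       *)
(*  nr_time p r   : time of that new_round(r) notification             *)
(*  head p r      : commit_head of p when its handler for r runs       *)
(*  invokes p r l : p invokes LBR(r, l)                                *)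
(*  returns p r   : the LBR invocation of p's handler for r returned,  *)
(*                  at time ret_time p r, with block ret p r           *)
(* Only the behaviour of non-Byzantine parties is constrained.         *)
Record execution (n f : nat) (S : system n f) := Execution {
  byz : {set 'I_n};
  crashed : {set 'I_n};
  byz_crashed_disj : [disjoint byz & crashed];
  faulty_bound : #|byz :|: crashed| <= f;
  GST : R;
  handles : 'I_n -> nat -> Prop;
  nr_time : 'I_n -> nat -> R;
  head : 'I_n -> nat -> Block S;
  invokes : 'I_n -> nat -> 'I_n -> Prop;
  returns : 'I_n -> nat -> Prop;
  ret : 'I_n -> nat -> Block S;
  ret_time : 'I_n -> nat -> R;

  handles_pos : forall p r, p \notin byz -> handles p r -> 0 < r;
  honest_handles : forall p r, p \notin byz :|: crashed -> 0 < r -> handles p r;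
  (* non-Byzantine parties process rounds in order until they (maybe) crash *)
  handles_prefix : forall p r, p \notin byz -> 0 < r -> handles p r.+1 -> handles p r;

  (* Algorithm 1: commit_head initially genesis, updated at the end of
     each round handler *)
  head_init : forall p, p \notin byz -> head p 1 = genesis S;
  head_step : forall p r, p \notin byz -> 0 < r -> handles p r.+1 ->
      returns p r /\
      (on_chain (head p r) (ret p r) -> head p r.+1 = ret p r) /\
      (~ on_chain (head p r) (ret p r) -> head p r.+1 = head p r);
  invokes_alg : forall p r l, p \notin byz -> invokes p r l ->
      handles p r /\ l = choose_leader r (head p r);
  invokes_honest : forall p r, p \notin byz :|: crashed -> handles p r ->
      invokes p r (choose_leader r (head p r));
  returns_invoked : forall p r, p \notin byz -> returns p r ->
      exists l, invokes p r l;

  honest_returns : forall p r, p \notin byz :|: crashed -> handles p r ->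
      returns p r;
  ret_timing : forall p r, p \notin byz -> returns p r ->
      Rle (nr_time p r) (ret_time p r) /\
      Rle (ret_time p r) (Rplus (nr_time p r) (Delta_l S));
  ret_round : forall p r, p \notin byz -> returns p r ->
      round S (ret p r) <= r /\ (certified S (ret p r) \/ ret p r = genesis S);
  endorse_via_lbr : forall p B, p \notin byz -> certified S B ->
      p \in endorsers S B -> invokes p (round S B) (author S B);
  lbr_endorsement : forall B, certified S B -> #|endorsers S B| = (2 * f).+1;
  lbr_agreement : forall p q r1 r2,
      p \notin byz :|: crashed -> q \notin byz :|: crashed ->
      returns p r1 -> returns q r2 ->
      certified S (ret p r1) -> certified S (ret q r2) ->
      on_chain (ret p r1) (ret q r2) \/ on_chain (ret q r2) (ret p r1);
  lbr_progress : forall r l (P : {set 'I_n}),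
      l \notin byz :|: crashed -> (2 * f).+1 <= #|P| ->
      (forall p, p \in P -> [/\ p \notin byz :|: crashed, invokes p r l &
                               Rle GST (nr_time p r)]) ->
      (exists a : R, forall p, p \in P ->
          Rle (nr_time p r) a /\
          Rle (Rplus a (Rmult (c_impl S) (delta S))) (ret_time p r)) ->
      forall p, p \in P ->
        [/\ certified S (ret p r), round S (ret p r) = r & author S (ret p r) = l];
  lbr_blocking : forall r l, l \notin byz -> ~ invokes l r l ->
      forall p, p \notin byz -> invokes p r l -> returns p r ->
      certified S (ret p r) -> round S (ret p r) <> r;
  lbr_reputation : forall p r, p \notin byz -> (forall l, ~ invokes p r l) ->
      forall B, certified S B -> round S B = r -> p \notin endorsers S B;
  (* Pacemaker timing (Delta_p = Delta_l) *)
  pacemaker : forall r,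
      (forall p, p \notin byz -> handles p r -> Rle GST (nr_time p r)) ->
      (forall p q, p \notin byz -> q \notin byz -> handles p r -> handles q r ->
          Rle (Rminus (nr_time p r) (nr_time q r)) (delta S)) /\
      (forall p q, p \notin byz -> q \notin byz -> handles p r -> handles q r.+1 ->
          Rle (Rplus (nr_time p r) (Delta_l S)) (nr_time q r.+1))
}.

Section ExecDefs.
Variables (n f : nat) (S : system n f) (E : execution S).

Definition honest (p : 'I_n) : Prop := p \notin byz E :|: crashed E.

Definition commits_in (p : 'I_n) (r : nat) (B : Block S) : Prop :=
  returns E p r /\ ret E p r = B /\ on_chain (head E p r) B.

Definition committed (B : Block S) : Prop :=
  exists p r B', honest p /\ commits_in p r B' /\ on_chain B B'.

Definition immediately_committed (B : Block S) : Prop :=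
  exists p, honest p /\ commits_in p (round S B) B.

Definition round_after_GST (r : nat) : Prop :=
  forall p, honest p -> Rle (GST E) (nr_time E p r).

End ExecDefs.

From Pilot Require Import Defs.
From mathcomp Require Import all_boot zify.
From Stdlib Require Import Classical.

Set Implicit Arguments.
Unset Strict Implicit.
Unset Printing Implicit Defensive.

(* An honest party q endorsed B, so the author of B is the Carousel choice
   made from q's commit head h.  If h is not from the previous round, this is
   the honest round-robin party.  Otherwise h and the f committed blocks lie
   on B's chain.  If no block of round >= r on h's chain has an honest author,
   the walk defining last_authors h only visits faulty-authored blocks, and it
   must collect f distinct authors before it passes the f committed blocks,
   i.e. before it drops below round r.  Hence last_authors h is the whole
   faulty set, and the reputation leader, chosen outside it, is honest. *)

Section Chains.
Variables (n f : nat) (S : system n f).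
Implicit Types a b c : Block S.

Lemma iter_parent_genesis k : iter k (parent S) (genesis S) = genesis S.
Proof. by elim: k => //= k ->; rewrite parent_genesis. Qed.

Lemma round_gt0_neq_genesis b : 0 < round S b -> b != genesis S.
Proof. by apply: contraTneq => ->; rewrite round_genesis. Qed.

Lemma round_parent_le b : round S (parent S b) <= round S b.
Proof.
have [->|/round_parent/ltnW //] := eqVneq b (genesis S).
by rewrite parent_genesis.
Qed.

Lemma round_iter_parent_le k b : round S (iter k (parent S) b) <= round S b.
Proof. by elim: k => //= k IH; exact: leq_trans (round_parent_le _) IH. Qed.

Lemma round_iter_parent_lt k b :
  0 < k -> b != genesis S -> round S (iter k (parent S) b) < round S b.
Proof.
case: k => // k _ /round_parent; rewrite iterSr.
exact: leq_ltn_trans (round_iter_parent_le _ _).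
Qed.

Lemma on_chain_refl b : on_chain b b.
Proof. by exists 0. Qed.

Lemma on_chain_parent b : on_chain (parent S b) b.
Proof. by exists 1. Qed.

Lemma on_chain_trans a b c : on_chain a b -> on_chain b c -> on_chain a c.
Proof. by move=> [i <-] [j <-]; exists (i + j); rewrite iterD. Qed.

Lemma on_chainS a b : on_chain a b -> a = b \/ on_chain a (parent S b).
Proof. by case=> -[|k] <-; [left | right; exists k; rewrite iterSr]. Qed.

Lemma on_chain_round a b : on_chain a b -> round S a <= round S b.
Proof. by move=> [k <-]; exact: round_iter_parent_le. Qed.

Lemma on_chain_genesis a : on_chain a (genesis S) -> a = genesis S.
Proof. by move=> [k <-]; exact: iter_parent_genesis. Qed.

Lemma on_chain_neq_genesis a b : on_chain a b -> a != genesis S -> b != genesis S.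
Proof. by move=> ab; apply: contra_neq => bg; move: ab; rewrite bg => /on_chain_genesis. Qed.

Lemma on_chain_by_round a b c : a != genesis S -> round S b <= round S a ->
  on_chain a c -> on_chain b c -> on_chain b a.
Proof.
move=> na le_ba [i ea] [j eb].
have [le_ij|lt_ji] := leqP i j; first by exists (j - i); rewrite -ea -iterD subnK.
have eba : iter (i - j) (parent S) b = a by rewrite -eb -iterD subnK // ltnW.
have nb : b != genesis S by apply: contra_neq na => gb; rewrite -eba gb iter_parent_genesis.
have ij_gt0 : 0 < i - j by rewrite subn_gt0.
by have := round_iter_parent_lt ij_gt0 nb; rewrite eba ltnNge le_ba.
Qed.

End Chains.

Section Carousel.
Variables (n f : nat) (S : system n f).

Lemma card_walk_le fuel (cur : Block S) (acc : {set 'I_n}) :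
  #|acc| <= f -> #|walk fuel cur acc| <= f.
Proof.
elim: fuel cur acc => //= k IH cur acc le_acc.
case: ifP => // /andP[lt_acc _]; apply: IH.
by rewrite cardsU1; apply: leq_trans lt_acc; rewrite -add1n leq_add2r leq_b1.
Qed.

Lemma card_last_authors_le (h : Block S) : #|last_authors h| <= f.
Proof. by apply: card_walk_le; rewrite cards0. Qed.

Lemma choose_leader_notin_last_authors k (h : Block S) :
  f < #|endorsers S h| -> round S h = k.-1 -> choose_leader k h \notin last_authors h.
Proof.
move=> lt_f rh; rewrite /choose_leader rh eqxx /=.
have : endorsers S h :\: last_authors h != set0.
  apply: contraTneq lt_f => e0; rewrite -(cardsID (last_authors h)) e0 cards0 addn0.
  by rewrite -leqNgt (leq_trans (subset_leq_card (subsetIr _ _))) ?card_last_authors_le.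
by move/(dchoiceP S); rewrite in_setD => /andP[].
Qed.

Section CoveringWalk.
Variables (r : nat) (X : seq (Block S)) (Bad : {set 'I_n}).
Hypotheses (r_gt0 : 0 < r) (size_X : size X = f)
  (uniq_authors_X : uniq (map (author S) X))
  (round_X : {in X, forall x, r <= round S x}).

Lemma card_authors_X_le (A : {set 'I_n}) :
  {in X, forall x, author S x \in A} -> f <= #|A|.
Proof.
move=> XA; rewrite -size_X -(size_map (author S)) -(card_uniqP uniq_authors_X).
by apply/subset_leq_card/subsetP => _ /mapP[x xX ->]; exact: XA.
Qed.

(* As long as fewer than f authors are collected, some block of X is still
   below the current block, which therefore has round >= r. *)
Lemma walk_covering fuel (cur : Block S) (acc : {set 'I_n}) :
  round S cur < fuel -> acc \subset Bad ->
  (forall b, on_chain b cur -> r <= round S b -> author S b \in Bad) ->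
  {in X, forall x, on_chain x cur \/ author S x \in acc} ->
  walk fuel cur acc \subset Bad /\ f <= #|walk fuel cur acc|.
Proof.
elim: fuel cur acc => // k IH cur acc /= lt_cur sub_acc bad_cur cover.
case: ifP => [/andP[lt_acc ncur] | stop].
  have r_cur : r <= round S cur.
    have : ~~ all (fun x => author S x \in acc) X.
      by apply: contraTN lt_acc => /allP all_acc; rewrite -leqNgt card_authors_X_le.
    case/allPn => x xX x_acc; have [x_cur|] := cover x xX; last by rewrite (negbTE x_acc).
    exact: leq_trans (round_X xX) (on_chain_round x_cur).
  apply: IH.
  - exact: leq_trans (round_parent ncur) lt_cur.
  - by rewrite subUset sub_acc sub1set andbT; apply: bad_cur (on_chain_refl _) r_cur.
  - by move=> b b_par; apply: bad_cur (on_chain_trans b_par (on_chain_parent _)).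
  - move=> x /cover[/on_chainS[->|x_par]|x_acc].
    + by right; rewrite setU11.
    + by left.
    + by right; rewrite setU1r.
split=> //; move/negbT: stop; rewrite negb_and negbK -leqNgt => /orP[//|/eqP cur_gen].
apply: card_authors_X_le => x xX; case: (cover x xX) => //.
rewrite cur_gen => /on_chain_genesis x_gen.
by move: (round_X xX); rewrite x_gen round_genesis leqNgt r_gt0.
Qed.

Hypothesis card_Bad : #|Bad| <= f.

Lemma last_authors_covering (h : Block S) :
  {in X, forall x, on_chain x h} ->
  (forall b, on_chain b h -> r <= round S b -> author S b \in Bad) ->
  last_authors h = Bad.
Proof.
move=> X_h bad_h.
have [sub le_f] := walk_covering (ltnSn (round S h)) (sub0set Bad) bad_h
  (fun x xX => or_introl (X_h x xX)).
by apply/eqP; rewrite eqEcard sub (leq_trans card_Bad le_f).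
Qed.

End CoveringWalk.
End Carousel.

Section Execution.
Variables (n f : nat) (S : system n f) (E : execution S).
Local Notation faulty := (byz E :|: crashed E).
Local Notation commit_head := (Defs.head E).

Lemma honest_notin_byz p : honest E p -> p \notin byz E.
Proof. by rewrite /honest in_setU negb_or => /andP[]. Qed.

Lemma honest_f_eq0 p : f = 0 -> honest E p.
Proof.
move=> f0; have no_faulty : #|faulty| == 0 by have := faulty_bound E; lia.
by rewrite /honest (cards0_eq (eqP no_faulty)) in_set0.
Qed.

Lemma ret_certified p k : p \notin byz E -> returns E p k ->
  ret E p k != genesis S -> certified S (ret E p k).
Proof. by move=> pb /(ret_round pb)[_ [//|->]]; rewrite eqxx. Qed.

Lemma head_returned q k : q \notin byz E -> 0 < k -> handles E q k ->
  commit_head q k = genesis S \/ exists2 j, returns E q j & commit_head q k = ret E q j.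
Proof.
move=> qb; elim: k => // -[_ _ hk|k IH _ hk]; first by left; exact: head_init.
have [returns_k [adopt keep]] := head_step qb (ltn0Sn k) hk.
have [ch|nch] := classic (on_chain (commit_head q k.+1) (ret E q k.+1)).
  by right; exists k.+1; last exact: adopt.
by rewrite (keep nch); apply: IH (handles_prefix qb (ltn0Sn k) hk).
Qed.

Lemma honest_endorser B : certified S B -> exists2 q, q \in endorsers S B & honest E q.
Proof.
move=> cB; have : ~~ (endorsers S B \subset faulty).
  apply: contraTN (faulty_bound E) => /subset_leq_card.
  by rewrite lbr_endorsement // -ltnNge; lia.
by case/subsetPn => q; exists q.
Qed.

Lemma certified_author_choice B : certified S B ->
  exists q, [/\ honest E q, handles E q (round S B) &
    author S B = choose_leader (round S B) (commit_head q (round S B))].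
Proof.
move=> cB; have [q qB hq] := honest_endorser cB.
have qb := honest_notin_byz hq.
by have [hk al] := invokes_alg qb (endorse_via_lbr qb cB qB); exists q.
Qed.

Lemma committed_on_chain x p j c : committed E x -> 0 < round S x -> honest E p ->
  returns E p j -> certified S (ret E p j) -> on_chain c (ret E p j) ->
  round S x <= round S c -> on_chain x c.
Proof.
move=> [p' [k' [_ [hp' [[ret' [<- _]] xB']]]]] rx hp ret_p cB cB_c le_xc.
have cB' := ret_certified (honest_notin_byz hp') ret'
  (on_chain_neq_genesis xB' (round_gt0_neq_genesis rx)).
have nc := round_gt0_neq_genesis (leq_trans rx le_xc).
have nB := on_chain_neq_genesis cB_c nc.
suff xB : on_chain x (ret E p j) by exact: on_chain_by_round nc le_xc cB_c xB.
have [B_B'|B'_B] := lbr_agreement hp hp' ret_p ret' cB cB'; last exact: on_chain_trans xB' B'_B.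
by apply: on_chain_by_round nB _ B_B' xB'; rewrite (leq_trans le_xc) ?on_chain_round.
Qed.

Lemma head_on_chain q k p j : honest E q -> handles E q k -> honest E p ->
  returns E p j -> certified S (ret E p j) -> commit_head q k != genesis S ->
  round S (commit_head q k) < round S (ret E p j) ->
  certified S (commit_head q k) /\ on_chain (commit_head q k) (ret E p j).
Proof.
move=> hq hk hp ret_p cB nh lt_h; have qb := honest_notin_byz hq.
have [hg|[i ret_i eh]] := head_returned qb (handles_pos qb hk) hk.
  by rewrite hg eqxx in nh.
rewrite eh in nh lt_h *; have ch := ret_certified qb ret_i nh; split=> //.
have [//|/on_chain_round] := lbr_agreement hq hp ret_i ret_p ch cB.
by rewrite leqNgt lt_h.
Qed.

Lemma reputation_leader_or_honest_block r (X : seq (Block S)) k h :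
  0 < r -> size X = f -> uniq (map (author S) X) ->
  {in X, forall x, r <= round S x} -> {in X, forall x, on_chain x h} ->
  certified S h -> round S h = k.-1 ->
  honest E (choose_leader k h) \/
  exists2 b, on_chain b h & r <= round S b /\ honest E (author S b).
Proof.
move=> r_gt0 size_X uniq_X round_X X_h ch rh.
have [|no_honest] := classic
  (exists2 b, on_chain b h & r <= round S b /\ honest E (author S b)); first by right.
left; have faulty_h b : on_chain b h -> r <= round S b -> author S b \in faulty.
  by move=> bh rb; apply/negPn/negP => hb; apply: no_honest; exists b.
rewrite /honest -(last_authors_covering r_gt0 size_X uniq_X round_X (faulty_bound E) X_h faulty_h).
by apply: choose_leader_notin_last_authors rh; rewrite lbr_endorsement //; lia.
Qed.

End Execution.

Theorem lemma7 (n f : nat) (Sy : system n f) (E : execution Sy) (r r' : nat) :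
  0 < r -> r <= r' ->
  round_after_GST E r' ->
  honest E (rr Sy r') -> honest E (rr Sy r'.+1) ->
  (exists X : seq (Block Sy),
      size X = f /\ uniq (map (author Sy) X) /\
      (forall x, x \in X ->
         [/\ committed E x, r <= round Sy x < r' & author Sy x \in byz E])) ->
  forall B : Block Sy, immediately_committed E B ->
    round Sy B = r' \/ round Sy B = r'.+1 ->
    exists B0 : Block Sy, on_chain B0 B /\ honest E (author Sy B0) /\
                         r <= round Sy B0 <= r'.+1.
Proof.
move=> r_gt0 le_rr' _ honest_r' honest_r'S [X [size_X [uniq_X HX]]].
move=> B [p [hp [ret_p [eB _]]]] rB.
have [le_r'B le_Br'] : r' <= round Sy B /\ round Sy B <= r'.+1 by case: rB => ->.
have B_witness : honest E (author Sy B) ->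
    exists B0, on_chain B0 B /\ honest E (author Sy B0) /\ r <= round Sy B0 <= r'.+1.
  by move=> hB; exists B; split; [exact: on_chain_refl | split=> //; apply/andP; lia].
have cB : certified Sy B.
  rewrite -eB; apply: ret_certified (honest_notin_byz hp) ret_p _.
  by rewrite eB round_gt0_neq_genesis //; lia.
have [q [hq hk al]] := certified_author_choice E cB.
set h := Defs.head E q (round Sy B) in al.
have [rh|nrh] := eqVneq (round Sy h) (round Sy B).-1; last first.
  by apply: B_witness; rewrite al /choose_leader nrh; case: rB => ->.
have [hg|nh] := eqVneq h (genesis Sy).
  (* then round B = 1 forces r = r' = 1, so X is empty *)
  apply/B_witness/honest_f_eq0; move: rh; rewrite hg round_genesis => rh.
  case: X size_X HX {uniq_X} => [size_nil _|x X' _ HX]; first by rewrite -size_nil.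
  by have [_ /andP[rx x_r'] _] := HX x (mem_head _ _); lia.
have [ch hB] : certified Sy h /\ on_chain h B.
  by have := head_on_chain hq hk hp ret_p; rewrite eB; apply=> //; rewrite rh; lia.
have round_X : {in X, forall x, r <= round Sy x} by move=> x /HX[_ /andP[]].
have X_h : {in X, forall x, on_chain x h}.
  move=> x /HX[cx /andP[rx x_r'] _].
  by have := committed_on_chain cx _ hp ret_p; rewrite eB; apply=> //; rewrite ?rh; lia.
have [|[b bh [rb hb]]] :=
  reputation_leader_or_honest_block E r_gt0 size_X uniq_X round_X X_h ch rh.
  by rewrite -al; exact: B_witness.
exists b; split; first exact: on_chain_trans bh hB.
by split=> //; apply/andP; have := on_chain_round bh; rewrite rh; lia.
Qed.
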